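(* The complete bipartite graph $K_{3,3}$ is B-factorizable.
   Context: Let $V$ be a finite set with $|V|$ even. $K=\binom{V}{2}$ is the set of 2-element subsets of $V$. An equal partition of $V$ is an unordered pair $\{H,A\}$ of disjoint subsets with $H\cup A=V$ and $|H|=|A|=|V|/2$; $C=C(V)$ is the set of equal partitions. For $c=\{H,A\}\in C$, $B_c$ is the complete bipartite graph with parts $H$ and $A$. Vectors live in $\mathbb N^{K\cup C}$ with $\mathbb N=\{0,1,2,\dots\}$; $v|_K$ denotes the restriction to coordinates in $K$. For $E\subseteq K$, $\chi_E\in\{0,1\}^K$ is its indicator vector. For $E\subseteq K$ and $c\in C$, $\chi_{E,c}\in\mathbb N^{K\cup C}$ has $K$-components $\chi_E$ and $C$-components equal to the indicator of $c$. $PM(V)=\{\chi_{q,c}: c\in C,\ q\text{ a perfect matching of }B_c\}$. For $\mathcal M\subseteq\mathbb N^{K\cup C}$, $\mathbf N(\mathcal M)$ is the set of finite nonnegative integer combinations of elements of $\mathcal M$, and $\overline{\mathbf N}(\mathcal M)=\{v\in\mathbb N^{K\cup C}: kv\in\mathbf N(\mathcal M)\text{ for some integer }k\ge1\}$. A regular graph $G=(V,E)$ is B-factorizable if every $v\in\overline{\mathbf N}(PM(V))$ with $v|_K=\chi_E$ belongs to $\mathbf N(PM(V))$. *)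

From mathcomp Require Import all_boot.
Set Implicit Arguments. Unset Strict Implicit. Unset Printing Implicit Defensive.

Section BFact.
Variable V : finType.

Definition Kpred (e : {set V}) : bool := #|e| == 2.
Definition Kt := {e : {set V} | Kpred e}.

(* C = equal partitions {H, A} of V, represented as the 2-set {H, ~: H} *)
Definition eqpart (P : {set {set V}}) : bool :=
  [exists H : {set V}, (#|H| * 2 == #|V|) && (P == [set H; ~: H])].
Definition Ct := {P : {set {set V}} | eqpart P}.

Definition vec := {ffun (Kt + Ct) -> nat}.

Definition in_Bc (c : Ct) (e : Kt) : bool :=
  [forall X in val c, #|val e :&: X| == 1].

Definition is_pm (c : Ct) (q : {set Kt}) : bool :=
  [forall e in q, in_Bc c e] &&
  [forall x : V, #|[set e in q | x \in val e]| == 1].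

Definition chiEc (E : {set Kt}) (c : Ct) : vec :=
  [ffun z => match z with inl e => nat_of_bool (e \in E)
                        | inr c' => nat_of_bool (c' == c) end].

Definition inN_PM (v : vec) : Prop :=
  exists s : seq ({set Kt} * Ct),
    all (fun p => is_pm p.2 p.1) s /\
    forall z, v z = \sum_(p <- s) chiEc p.1 p.2 z.

Definition inNbar_PM (v : vec) : Prop :=
  exists k : nat, 0 < k /\ inN_PM [ffun z => k * v z].

Definition B_factorizable (E : {set Kt}) : Prop :=
  forall v : vec, inNbar_PM v ->
    (forall e : Kt, v (inl e) = nat_of_bool (e \in E)) -> inN_PM v.

Definition regular (E : {set Kt}) : Prop :=
  exists d, forall x : V, #|[set e in E | x \in val e]| = d.

Definition complete_bip (H : {set V}) : {set Kt} :=
  [set e : Kt | #|val e :&: H| == 1].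

End BFact.

From mathcomp Require Import all_boot all_algebra zify.
Set Implicit Arguments. Unset Strict Implicit. Unset Printing Implicit Defensive.
Import GRing.Theory.

(* Number the two sides of K_{3,3} by Z/3.  Its six perfect matchings are the
   bijections i |-> a + i ("even") and i |-> a - i ("odd"), encoded by labels
   (b, a) with b the parity; the cell (i, j) lies on exactly one matching of
   each parity, namely the one with a = diag b (i, j) (= j - i or j + i).  An
   equal partition c = {X, ~: X} of V either admits all six matchings as
   perfect matchings of B_c (X = H or ~: H), or "pins" one cell (i, j): the
   admissible matchings are exactly the two through (i, j).

   Let k v = sum of terms (matching, partition) with v|_K = chi_E.  Every cell
   is covered k times, so all even matchings are used equally often, and so are
   all odd ones; moreover v|_C is a multiset L of three partitions.  If for some
   parity the pinned partitions of L pin cells on distinct diagonals, the three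
   matchings of that parity can be handed out to the members of L, exhibiting v
   itself as a sum of three elements of PM(V).  Otherwise, for each parity at
   least f + 1 diagonals (f = number of unpinned members of L) are pinned by no
   member of L; the terms using them need unpinned partitions, so they number at
   least (f + 1) k, whereas there are exactly f k such terms: contradiction. *)

(* Both sides of K_{3,3} are indexed by 'I_3 = Z/3; an edge is a cell (i, j). *)
Definition cell := ('I_3 * 'I_3)%type.

(* A label (b, a) names the bijection [mate (b, a)] : i |-> a + i (b = false)
   or i |-> a - i (b = true); these are the six perfect matchings of K_{3,3}. *)
Definition label := (bool * 'I_3)%type.

Definition mate (r : label) (i : 'I_3) : 'I_3 :=
  if r.1 then (r.2 - i)%R else (r.2 + i)%R.

(* The diagonal of parity b through a cell: the unique a with (b, a) through it. *)
Definition diag (b : bool) (x : cell) : 'I_3 :=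
  if b then (x.2 + x.1)%R else (x.2 - x.1)%R.

Definition comate (r : label) (j : 'I_3) : 'I_3 :=
  if r.1 then (r.2 - j)%R else (j - r.2)%R.

Lemma mateE r i j : (mate r i == j) = (r.2 == diag r.1 (i, j)).
Proof.
case: r => [[] a]; rewrite /mate /diag /=; first by rewrite subr_eq.
by rewrite -subr_eq opprK.
Qed.

Lemma mate_eqE r i j : (mate r i == j) = (i == comate r j).
Proof.
case: r => [[] a]; rewrite /mate /comate /= [RHS]eq_sym subr_eq.
  by rewrite subr_eq addrC.
by rewrite eq_sym addrC.
Qed.

Lemma mate_comate r j : mate r (comate r j) = j.
Proof. by apply/eqP; rewrite mate_eqE. Qed.

(* Explicit enumerations of 'I_3 and of the labels, so that finite facts about
   them can be decided by evaluation. *)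
Definition o0 : 'I_3 := @Ordinal 3 0 isT.
Definition o1 : 'I_3 := @Ordinal 3 1 isT.
Definition o2 : 'I_3 := @Ordinal 3 2 isT.
Definition ords3 : seq 'I_3 := [:: o0; o1; o2].
Definition labels : seq label := [seq (b, a) | b <- [:: false; true], a <- ords3].
Definition options3 : seq (option 'I_3) := None :: map Some ords3.

Lemma ord3_ind (P : 'I_3 -> Prop) : P o0 -> P o1 -> P o2 -> forall i, P i.
Proof.
move=> P0 P1 P2 [[|[|[|m]]] Hm] //; set i := Ordinal _.
- by rewrite (_ : i = o0) //; apply: val_inj.
- by rewrite (_ : i = o1) //; apply: val_inj.
- by rewrite (_ : i = o2) //; apply: val_inj.
Qed.

Lemma mem_ords3 i : i \in ords3.
Proof. by case: i => [[|[|[|m]]] Hm]. Qed.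

Lemma enum_ord3 : enum 'I_3 = ords3.
Proof. by apply: (inj_map val_inj); rewrite val_enum_ord. Qed.

Lemma card_pred3 (Q : pred 'I_3) : #|[set i | Q i]| = Q o0 + Q o1 + Q o2.
Proof.
rewrite -sum1_card big_mkcond /= -big_enum enum_ord3 !big_cons big_nil !inE.
by case: (Q o0); case: (Q o1); case: (Q o2).
Qed.

Lemma mem_labels r : r \in labels.
Proof. by case: r => [[] [[|[|[|m]]] Hm]]. Qed.

Lemma mem_options3 o : o \in options3.
Proof. by case: o => [[[|[|[|m]]] Hm]|]. Qed.

(* Any even and any odd diagonal meet in a cell (2 is invertible mod 3). *)
Lemma diag_onto_check :
  all (fun a => all (fun a' => has (fun i => has (fun j =>
    (diag false (i, j) == a) && (diag true (i, j) == a')) ords3) ords3) ords3) ords3.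
Proof. by vm_compute. Qed.

Lemma diag_onto a a' : exists x : cell, diag false x = a /\ diag true x = a'.
Proof.
have /allP/(_ a (mem_ords3 a))/allP/(_ a' (mem_ords3 a')) := diag_onto_check.
by case/hasP=> i _ /hasP [j _ /andP [/eqP da /eqP da']]; exists (i, j).
Qed.

Lemma mate_onto_check :
  all (fun x => all (fun y => all (fun z => uniq [:: x; y; z] ==>
    has (fun r => [&& mate r o0 == x, mate r o1 == y & mate r o2 == z]) labels)
  ords3) ords3) ords3.
Proof. by vm_compute. Qed.

Lemma mate_onto (f : 'I_3 -> 'I_3) : injective f -> exists r, mate r =1 f.
Proof.
move=> f_inj; have uniq_f : uniq [:: f o0; f o1; f o2].
  by rewrite /= !inE !(inj_eq f_inj).
have /allP/(_ (f o0) (mem_ords3 _))/allP/(_ (f o1) (mem_ords3 _))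
  /allP/(_ (f o2) (mem_ords3 _))/implyP/(_ uniq_f) := mate_onto_check.
case/hasP=> r _ /and3P [/eqP f0 /eqP f1 /eqP f2]; exists r.
exact: ord3_ind.
Qed.

Definition fits (o : option 'I_3) (a : 'I_3) : bool :=
  if o is Some d then a == d else true.

Lemma assign_check :
  all (fun o1 => all (fun o2 => all (fun o3 => uniq (pmap id [:: o1; o2; o3]) ==>
    has (fun a1 => has (fun a2 => has (fun a3 =>
      [&& perm_eq [:: a1; a2; a3] ords3, fits o1 a1, fits o2 a2 & fits o3 a3])
    ords3) ords3) ords3) options3) options3) options3.
Proof. by vm_compute. Qed.

Lemma assign3 (o1 o2 o3 : option 'I_3) : uniq (pmap id [:: o1; o2; o3]) ->
  exists a1 a2 a3,
    [/\ perm_eq [:: a1; a2; a3] ords3, fits o1 a1, fits o2 a2 & fits o3 a3].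
Proof.
move=> uniq_o; have /allP/(_ o1 (mem_options3 _))/allP/(_ o2 (mem_options3 _))
  /allP/(_ o3 (mem_options3 _))/implyP/(_ uniq_o) := assign_check.
case/hasP=> a1 _ /hasP [a2 _ /hasP [a3 _ /and4P [perm_a fit1 fit2 fit3]]].
by exists a1, a2, a3.
Qed.

Lemma count_sum (A : Type) (a : pred A) (s : seq A) : count a s = \sum_(x <- s) a x.
Proof. by rewrite -sumn_count sumnE big_map. Qed.

Lemma exists_multiset (T : finType) (m : T -> nat) :
  exists L : seq T, forall c, count_mem c L = m c.
Proof.
exists (flatten [seq nseq (m x) x | x <- enum T]) => c.
rewrite count_flatten -map_comp sumnE big_map big_enum /=.
rewrite (bigD1 c) //= count_nseq /= eqxx mul1n big1 ?addn0 // => x x_c.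
by rewrite count_nseq /= (negbTE x_c).
Qed.

Lemma sum_by_key (A : Type) (K : finType) (key : A -> K) (s : seq A) (F : K -> nat) :
  \sum_(p <- s) F (key p) = \sum_(r : K) F r * \sum_(p <- s) (key p == r).
Proof.
under [RHS]eq_bigr => r _ do rewrite big_distrr /=.
rewrite exchange_big /=; apply: eq_bigr => p _.
rewrite (bigD1 (key p)) //= eqxx muln1 big1 ?addn0 // => r.
by rewrite eq_sym => /negbTE ->; rewrite muln0.
Qed.

Lemma pmap_omap (A B C : Type) (g : B -> C) (h : A -> option B) (l : seq A) :
  pmap id [seq omap g (h x) | x <- l] = [seq g y | y <- pmap h l].
Proof. by elim: l => //= x l IH; case: (h x) => /= [y|]; rewrite IH. Qed.

Definition admissible (x : option cell) (r : label) : bool :=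
  if x is Some y then mate r y.1 == y.2 else true.

(* The counting core.  [s] is a list of terms (label, partition), where the
   partitions range over an abstract finite type T and each may pin a cell;
   every term is admissible, every cell is covered k > 0 times, and each
   partition occurs k times as often as in the multiset L. *)
Section LatinCore.
Variables (T : finType) (pin : T -> option cell) (k : nat).
Variables (s : seq (label * T)) (L : seq T).
Hypothesis k_gt0 : 0 < k.
Hypothesis s_adm : forall p, p \in s -> admissible (pin p.2) p.1.
Hypothesis s_cover : forall x : cell, \sum_(p <- s) (mate p.1 x.1 == x.2) = k.
Hypothesis s_mult : forall c, \sum_(p <- s) (p.2 == c) = k * count_mem c L.

Definition uses (r : label) : nat := \sum_(p <- s) (p.1 == r).

Lemma sum_part (F : T -> nat) : \sum_(p <- s) F p.2 = k * \sum_(c <- L) F c.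
Proof.
rewrite (sum_by_key snd) (sum_by_key id L) big_distrr /=.
by apply: eq_bigr => c _; rewrite s_mult -count_sum mulnCA.
Qed.

Lemma cover_uses x : uses (false, diag false x) + uses (true, diag true x) = k.
Proof.
rewrite -(s_cover x) (sum_by_key fst s (fun r => mate r x.1 == x.2)) /uses.
rewrite (bigD1 (false, diag false x)) // (bigD1 (true, diag true x)) //=.
rewrite !mateE /= !eqxx !mul1n [X in _ + (_ + X)]big1 ?addn0 // => -[b a].
rewrite mateE /= => /andP [ne1 ne2]; apply/eqP; rewrite muln_eq0 eqb0; apply/orP; left.
by case: b ne1 ne2 => ne1 ne2; [apply: contraNN ne2 | apply: contraNN ne1] => /eqP ->.
Qed.

Lemma uses_pair a a' : uses (false, a) + uses (true, a') = k.
Proof. by have [x [<- <-]] := diag_onto a a'; exact: cover_uses. Qed.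

Lemma uses_balanced r : uses r = uses (r.1, o0).
Proof.
case: r => b a; apply/eqP; case: b.
  by rewrite -(eqn_add2l (uses (false, o0))) !uses_pair.
by rewrite -(eqn_add2r (uses (true, o0))) !uses_pair.
Qed.

(* Counting the edges at one vertex, s has 3k terms, so L has 3 members. *)
Lemma size_L : size L = 3.
Proof.
have size_s : size s = 3 * k.
  rewrite -sum1_size (sum_by_key (fun p => mate p.1 o0) s (fun _ => 1)).
  under eq_bigr => j _ do rewrite mul1n (s_cover (o0, j)).
  by rewrite sum_nat_const card_ord.
have := sum_part (fun _ => 1); rewrite !sum1_size size_s mulnC => /eqP.
by rewrite eqn_pmul2l // => /eqP.
Qed.

Lemma terms_in_L p : p \in s -> p.2 \in L.
Proof.
move=> ps; apply/negPn/negP => p2L.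
have none : \sum_(c <- L) (c \notin L) = 0 by rewrite big1_seq // => c /andP [_ ->].
by have := sum_part (fun c => c \notin L); rewrite none muln0 (big_rem p ps) /= p2L.
Qed.

Definition pinned_diags (b : bool) : seq 'I_3 := [seq diag b x | x <- pmap pin L].

Definition unpinned : nat := count (fun c => pin c == None) L.

Lemma unpinned_lt_free_diags b :
  ~~ uniq (pinned_diags b) -> unpinned < #|[predC pinned_diags b]|.
Proof.
move=> rep; have card_split : #|pinned_diags b| + #|[predC pinned_diags b]| = 3.
  by have := cardC [in pinned_diags b]; rewrite card_ord.
have lt_card : #|pinned_diags b| < size (pinned_diags b).
  by rewrite ltn_neqAle card_size andbT; apply: contra rep => /eqP/card_uniqP.
have : size (pinned_diags b) + unpinned = size L.
  rewrite size_map size_pmap -(count_predC (fun c => pin c)).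
  by apply/eqP; rewrite eqn_add2l; apply/eqP/eq_count => c /=; case: (pin c).
rewrite size_L; lia.
Qed.

Lemma pinned_term_diag p :
  p \in s -> pin p.2 != None -> p.1.2 \in pinned_diags p.1.1.
Proof.
move=> ps; have := s_adm ps; case pin_p: (pin p.2) => [[i j]|] //= adm _.
rewrite mateE in adm; rewrite (eqP adm); apply: map_f.
by rewrite mem_pmap -pin_p map_f ?terms_in_L.
Qed.

(* Terms on an unpinned diagonal carry unpinned partitions: at most k times
   [unpinned] of them. *)
Lemma free_diag_terms_le :
  \sum_(p <- s) (p.1.2 \notin pinned_diags p.1.1) <= k * unpinned.
Proof.
rewrite /unpinned count_sum -(sum_part (fun c => pin c == None)).
rewrite big_seq [X in _ <= X]big_seq; apply: leq_sum => p ps.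
case: (boolP (pin p.2 == None)) => [_ | pinned]; first exact: leq_b1.
by rewrite (pinned_term_diag ps pinned).
Qed.

(* If both parities repeat a pinned diagonal, balance forces many such terms. *)
Lemma free_diag_terms_ge : (forall b, ~~ uniq (pinned_diags b)) ->
  unpinned.+1 * k <= \sum_(p <- s) (p.1.2 \notin pinned_diags p.1.1).
Proof.
move=> rep; have card_free b : \sum_a (a \notin pinned_diags b) = #|[predC pinned_diags b]|.
  by rewrite -sum1_card [RHS]big_mkcond; apply: eq_bigr => a _; rewrite inE.
rewrite (sum_by_key fst s (fun r => r.2 \notin pinned_diags r.1)).
under eq_bigr => r _ do rewrite -/(uses r) uses_balanced.
rewrite -(pair_bigA _ (fun b a => (a \notin pinned_diags b) * uses (b, o0))) big_bool /=.
rewrite -!big_distrl /= !card_free -(uses_pair o0 o0) mulnDr addnC.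
by apply: leq_add; apply: leq_mul => //; apply: unpinned_lt_free_diags.
Qed.

Lemma good_parity : exists b, uniq (pinned_diags b).
Proof.
case: (boolP (uniq (pinned_diags false))) => [u | rep0]; first by exists false.
case: (boolP (uniq (pinned_diags true))) => [u | rep1]; first by exists true.
have rep b : ~~ uniq (pinned_diags b) by case: b.
exfalso; have := leq_trans (free_diag_terms_ge rep) free_diag_terms_le.
by move: k_gt0; nia.
Qed.

(* The matchings of a good parity, distributed over the members of L,
   form an exact decomposition. *)
Lemma latin_witness : exists t : seq (label * T),
  [/\ map snd t = L, forall p, p \in t -> admissible (pin p.2) p.1
    & forall x : cell, \sum_(p <- t) (mate p.1 x.1 == x.2) = 1].
Proof.
have [b] := good_parity; rewrite /pinned_diags -pmap_omap => uniq_b.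
have [c1 [c2 [c3 L_eq]]] : exists c1 c2 c3, L = [:: c1; c2; c3].
  by move: size_L; case: L => [|c1 [|c2 [|c3 [|]]]] // _; exists c1, c2, c3.
pose d c := omap (diag b) (pin c); rewrite L_eq /= -/(d c1) -/(d c2) -/(d c3) in uniq_b.
have [a1 [a2 [a3 [perm_a fit1 fit2 fit3]]]] := assign3 uniq_b.
exists [:: (b, a1, c1); (b, a2, c2); (b, a3, c3)]; split=> [|p|x]; first by rewrite L_eq.
  have fit_adm c a : fits (d c) a -> admissible (pin c) (b, a).
    by rewrite /d; case: (pin c) => [[i j] /eqP ->|] //=; rewrite mateE.
  by rewrite !inE => /or3P [] /eqP -> /=; apply: fit_adm.
rewrite !big_cons big_nil /= !mateE /=.
rewrite -[LHS]/(count_mem (diag b (x.1, x.2)) [:: a1; a2; a3]).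
by rewrite (permP perm_a) count_uniq_mem ?mem_ords3.
Qed.

End LatinCore.

Lemma card1I (T : finType) (a : T) (X : {set T}) : #|[set a] :&: X| = (a \in X).
Proof.
case aX: (a \in X); first by rewrite (setIidPl _) ?cards1 // sub1set.
apply/eqP; rewrite cards_eq0; apply/eqP/setP => x; rewrite !inE.
by case: (x =P a) => // ->; rewrite aX.
Qed.

Lemma card2I (T : finType) (a b : T) (X : {set T}) :
  a != b -> #|[set a; b] :&: X| = (a \in X) + (b \in X).
Proof.
move=> ab; rewrite setIUl cardsU !card1I.
suff -> : [set a] :&: X :&: ([set b] :&: X) = set0 by rewrite cards0 subn0.
apply/setP => x; rewrite !inE; case: (x =P a) => // ->.
by rewrite (negbTE ab) andbF.
Qed.

(* With sides A and B of a partition given by membership tests on the two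
   sides of K_{3,3}, [crosses inA inB r] says every edge of [mate r] crosses. *)
Definition crosses (inA inB : 'I_3 -> bool) (r : label) : bool :=
  all (fun i => inA i != inB (mate r i)) ords3.

Definition bools3 (b0 b1 b2 : bool) (i : 'I_3) : bool := nth false [:: b0; b1; b2] i.

Lemma bools3E (f : 'I_3 -> bool) : bools3 (f o0) (f o1) (f o2) =1 f.
Proof. exact: ord3_ind. Qed.

Definition cells : seq cell := [seq (i, j) | i <- ords3, j <- ords3].

(* Classification of the equal partitions: a half of size 3 either makes every
   matching crossing, or exactly the matchings through one cell. *)
Lemma classify_check (a0 a1 a2 b0 b1 b2 : bool) :
  (a0 + a1 + a2 + b0 + b1 + b2 == 3) ==>
  all (crosses (bools3 a0 a1 a2) (bools3 b0 b1 b2)) labels ||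
  has (fun x => all (fun r =>
    crosses (bools3 a0 a1 a2) (bools3 b0 b1 b2) r == (mate r x.1 == x.2)) labels) cells.
Proof. by case: a0; case: a1; case: a2; case: b0; case: b1; case: b2; vm_compute. Qed.

Lemma classify_crossing (inA inB : 'I_3 -> bool) :
  inA o0 + inA o1 + inA o2 + inB o0 + inB o1 + inB o2 = 3 ->
  (forall r, crosses inA inB r) \/
  exists x : cell, forall r, crosses inA inB r = (mate r x.1 == x.2).
Proof.
have crossE r : crosses (bools3 (inA o0) (inA o1) (inA o2))
                        (bools3 (inB o0) (inB o1) (inB o2)) r = crosses inA inB r.
  by apply: eq_all => i; rewrite !bools3E.
move=> card3; have := classify_check (inA o0) (inA o1) (inA o2) (inB o0) (inB o1) (inB o2).
rewrite card3 eqxx implyTb => /orP [/allP all_cross | /hasP [x _ /allP cross_x]].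
  by left=> r; rewrite -crossE all_cross ?mem_labels.
by right; exists x => r; rewrite -crossE; apply/eqP/cross_x/mem_labels.
Qed.

Section CompleteBipartite33.
Variables (V : finType) (H : {set V}).
Hypotheses (card_V : #|V| = 6) (card_H : #|H| = 3).
Local Notation E := (complete_bip H).

Lemma card_setCH : #|~: H| = 3.
Proof. by rewrite cardsCs setCK card_V card_H. Qed.

Definition hv (i : 'I_3) : V := enum_val (cast_ord (esym card_H) i).
Definition tv (j : 'I_3) : V := enum_val (cast_ord (esym card_setCH) j).

Lemma hv_in i : hv i \in H. Proof. exact: enum_valP. Qed.

Lemma tv_notin j : tv j \notin H.
Proof. by have := enum_valP (cast_ord (esym card_setCH) j); rewrite in_setC. Qed.

Lemma hv_inj : injective hv.
Proof. by move=> i i' /enum_val_inj /cast_ord_inj. Qed.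

Lemma tv_inj : injective tv.
Proof. by move=> j j' /enum_val_inj /cast_ord_inj. Qed.

Lemma hv_onto x : x \in H -> exists i, x = hv i.
Proof.
move=> xH; exists (cast_ord card_H (enum_rank_in xH x)).
by rewrite /hv cast_ordK enum_rankK_in.
Qed.

Lemma tv_onto x : x \notin H -> exists j, x = tv j.
Proof.
rewrite -in_setC => xT; exists (cast_ord card_setCH (enum_rank_in xT x)).
by rewrite /tv cast_ordK enum_rankK_in.
Qed.

Lemma hv_neq_tv i j : hv i != tv j.
Proof. by apply: contraNneq (tv_notin j) => <-; exact: hv_in. Qed.

Lemma edge_proof i j : Kpred [set hv i; tv j].
Proof. by rewrite /Kpred cards2 hv_neq_tv. Qed.

Definition edge (i j : 'I_3) : Kt V := exist _ [set hv i; tv j] (edge_proof i j).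

Lemma hv_in_edge i0 i j : (hv i0 \in val (edge i j)) = (i0 == i).
Proof. by rewrite /= in_set2 (inj_eq hv_inj) (negbTE (hv_neq_tv _ _)) orbF. Qed.

Lemma tv_in_edge j0 i j : (tv j0 \in val (edge i j)) = (j0 == j).
Proof. by rewrite /= in_set2 (inj_eq tv_inj) eq_sym (negbTE (hv_neq_tv _ _)). Qed.

Lemma edge_inj i j i' j' : edge i j = edge i' j' -> i = i' /\ j = j'.
Proof.
move=> eq_e; split; apply/eqP.
  by rewrite -(hv_in_edge i i' j') -eq_e hv_in_edge.
by rewrite -(tv_in_edge j i' j') -eq_e tv_in_edge.
Qed.

Lemma edgeP e : reflect (exists i j, e = edge i j) (e \in E).
Proof.
rewrite inE; apply: (iffP idP); last first.
  by case=> i [j ->] /=; rewrite card2I ?hv_neq_tv // hv_in (negbTE (tv_notin j)).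
have /cards2P [x [y [xy val_e]]] := valP e; rewrite val_e card2I //.
case xH: (x \in H); case yH: (y \in H) => //= _.
  have [i x_i] := hv_onto xH; have [j y_j] : exists j, y = tv j by apply: tv_onto; rewrite yH.
  by exists i, j; apply: val_inj; rewrite val_e x_i y_j.
have [i y_i] := hv_onto yH; have [j x_j] : exists j, x = tv j by apply: tv_onto; rewrite xH.
by exists i, j; apply: val_inj; rewrite val_e x_j y_i setUC.
Qed.

Lemma edge_in_E i j : edge i j \in E.
Proof. by apply/edgeP; exists i, j. Qed.

Lemma degree x : #|[set e in E | x \in val e]| = 3.
Proof.
have card_star (f : 'I_3 -> Kt V) : injective f -> #|f @: [set: 'I_3]| = 3.
  by move=> f_inj; rewrite card_imset // cardsT card_ord.
case xH: (x \in H).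
  have [i ->] := hv_onto xH; rewrite -(card_star (edge i)); last by move=> j j' /edge_inj [].
  apply: eq_card => e; rewrite in_set; apply/andP/imsetP.
    by case=> /edgeP [i' [j ->]]; rewrite hv_in_edge => /eqP ->; exists j.
  by case=> j _ ->; rewrite edge_in_E hv_in_edge.
have [j ->] : exists j, x = tv j by apply: tv_onto; rewrite xH.
rewrite -(card_star (edge^~ j)); last by move=> i i' /edge_inj [].
apply: eq_card => e; rewrite in_set; apply/andP/imsetP.
  by case=> /edgeP [i [j' ->]]; rewrite tv_in_edge => /eqP ->; exists i.
by case=> i _ ->; rewrite edge_in_E tv_in_edge.
Qed.

Definition matching (r : label) : {set Kt V} := [set edge i (mate r i) | i : 'I_3].

Lemma edge_in_matching r i j : (edge i j \in matching r) = (mate r i == j).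
Proof.
apply/imsetP/eqP => [[i' _ /edge_inj [-> ->]] // | <-].
by exists i.
Qed.

Lemma matching_sub_E r : {subset matching r <= E}.
Proof. by move=> e /imsetP [i _ ->]; exact: edge_in_E. Qed.

Lemma matching_degree r x : #|[set e in matching r | x \in val e]| == 1.
Proof.
apply/cards1P; case xH: (x \in H).
  have [i0 ->] := hv_onto xH; exists (edge i0 (mate r i0)).
  apply/setP => e; rewrite !inE; apply/andP/eqP => [[/imsetP [i _ ->]] | ->].
    by rewrite hv_in_edge => /eqP ->.
  by rewrite hv_in_edge edge_in_matching !eqxx.
have [j0 ->] : exists j, x = tv j by apply: tv_onto; rewrite xH.
exists (edge (comate r j0) j0).
apply/setP => e; rewrite !inE; apply/andP/eqP => [[/imsetP [i _ ->]] | ->].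
  by rewrite tv_in_edge eq_sym mate_eqE => /eqP ->; rewrite mate_comate.
by rewrite tv_in_edge edge_in_matching mate_comate !eqxx.
Qed.

Lemma in_Bc_edge (c : Ct V) X i j : val c = [set X; ~: X] ->
  in_Bc c (edge i j) = ((hv i \in X) != (tv j \in X)).
Proof.
move=> c_X; have -> : in_Bc c (edge i j) =
    (#|val (edge i j) :&: X| == 1) && (#|val (edge i j) :&: ~: X| == 1).
  apply/forall_inP/andP => [cross | [crossX crossCX] Y].
    by split; apply: cross; rewrite c_X !inE eqxx ?orbT.
  by rewrite c_X in_set2 => /orP [/eqP -> | /eqP ->].
rewrite /= !card2I ?hv_neq_tv // !in_setC.
by case: (hv i \in X); case: (tv j \in X).
Qed.

Lemma is_pm_matching (c : Ct V) X r : val c = [set X; ~: X] ->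
  is_pm c (matching r) = crosses (fun i => hv i \in X) (fun j => tv j \in X) r.
Proof.
move=> c_X; rewrite /is_pm.
have -> : [forall x, #|[set e in matching r | x \in val e]| == 1].
  by apply/forallP => x; exact: matching_degree.
rewrite andbT /crosses.
apply/forall_inP/allP => [all_in i _ | all_cross e /imsetP [i _ ->]].
  by rewrite -(in_Bc_edge i (mate r i) c_X); apply: all_in; apply/imsetP; exists i.
by rewrite (in_Bc_edge _ _ c_X); apply: all_cross; exact: mem_ords3.
Qed.

Lemma classify_partition (c : Ct V) :
  (forall r, is_pm c (matching r)) \/
  exists x : cell, forall r, is_pm c (matching r) = (mate r x.1 == x.2).
Proof.
have /existsP [X /andP [/eqP card_X /eqP c_X]] := valP c.
have card3 : #|X| = 3 by apply/eqP; rewrite -(eqn_pmul2r (isT : 0 < 2)) card_X card_V.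
have XH : X :&: H = hv @: [set i | hv i \in X].
  apply/setP => x; rewrite !inE; apply/andP/imsetP => [[xX xH] | [i]].
    by have [i x_i] := hv_onto xH; exists i; rewrite ?inE -?x_i.
  by rewrite inE => hiX ->; split => //; exact: hv_in.
have XT : X :\: H = tv @: [set j | tv j \in X].
  apply/setP => x; rewrite !inE; apply/andP/imsetP => [[xT xX] | [j]].
    by have [j x_j] := tv_onto xT; exists j; rewrite ?inE -?x_j.
  by rewrite inE => tjX ->; split => //; exact: tv_notin.
have count3 : (hv o0 \in X) + (hv o1 \in X) + (hv o2 \in X)
    + (tv o0 \in X) + (tv o1 \in X) + (tv o2 \in X) = 3.
  rewrite -card3 -(cardsID H X) XH XT !card_imset; [|exact: tv_inj | exact: hv_inj].
  by rewrite !card_pred3 !addnA.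
case: (@classify_crossing (fun i => hv i \in X) (fun j => tv j \in X) count3).
  by move=> all_cross; left=> r; rewrite (is_pm_matching _ c_X).
by case=> x cross_x; right; exists x => r; rewrite (is_pm_matching _ c_X).
Qed.

Definition pin (c : Ct V) : option cell :=
  if [forall r, is_pm c (matching r)] then None
  else [pick x : cell | [forall r, is_pm c (matching r) == (mate r x.1 == x.2)]].

Lemma pm_admissible c r : is_pm c (matching r) = admissible (pin c) r.
Proof.
rewrite /pin; case: ifP => [/forallP -> // | not_all].
case: pickP => [x /forallP /(_ r) /eqP -> // | no_pin].
exfalso; case: (classify_partition c) => [all_pm | [x pin_x]].
  by move/negbT: not_all; rewrite negb_forall => /existsP [r']; rewrite all_pm.
by move/negbT: (no_pin x); rewrite negb_forall => /existsP [r']; rewrite pin_x eqxx.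
Qed.

Lemma pm_is_matching (c : Ct V) (q : {set Kt V}) :
  is_pm c q -> {subset q <= E} -> exists r, q = matching r.
Proof.
case/andP=> _ /forallP deg1 qE.
have q_at (x : V) e e' : e \in q -> e' \in q -> x \in val e -> x \in val e' -> e = e'.
  move=> eq e'q xe xe'; have /cards1P [e0 star] := deg1 x.
  have : e \in [set e in q | x \in val e] by rewrite inE eq xe.
  have : e' \in [set e in q | x \in val e] by rewrite inE e'q xe'.
  by rewrite star !inE => /eqP -> /eqP ->.
have hv_covered i : exists j, edge i j \in q.
  have /cards1P [e0 star] := deg1 (hv i).
  have : e0 \in [set e in q | hv i \in val e] by rewrite star set11.
  rewrite inE => /andP [e0q]; have /edgeP [i' [j e0_ij]] := qE _ e0q.
  by rewrite e0_ij hv_in_edge => /eqP i_i'; exists j; rewrite i_i' -e0_ij.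
pose f i := odflt o0 [pick j | edge i j \in q].
have f_in i : edge i (f i) \in q.
  rewrite /f; case: pickP => [j // | none].
  by have [j ij_q] := hv_covered i; have := none j; rewrite ij_q.
have f_inj : injective f.
  move=> i i' fi; apply: (proj1 (edge_inj (q_at (tv (f i)) _ _ (f_in i) (f_in i') _ _))).
    by rewrite tv_in_edge.
  by rewrite tv_in_edge fi.
have [r mate_f] := mate_onto f_inj; exists r.
apply/setP => e; apply/idP/imsetP => [e_q | [i _ ->]]; last by rewrite mate_f.
have /edgeP [i [j e_ij]] := qE _ e_q; exists i => //; rewrite mate_f e_ij.
by apply: (q_at (hv i)); rewrite ?f_in ?hv_in_edge -?e_ij.
Qed.

Lemma K33_regular : regular E.
Proof. by exists 3; exact: degree. Qed.

(* A decomposition k v = sum of elements of PM(V), with v|_K = chi_E, turned into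
   labelled terms satisfying the hypotheses of the counting core. *)
Section Decomposition.
Variables (v : vec V) (k : nat) (s : seq ({set Kt V} * Ct V)).
Hypothesis s_pm : all (fun p => is_pm p.2 p.1) s.
Hypothesis s_sum : forall z, k * v z = \sum_(p <- s) chiEc p.1 p.2 z.
Hypothesis v_K : forall e, v (inl e) = (e \in E).

(* Every term lies inside E, since v vanishes off E. *)
Lemma term_sub_E p : p \in s -> {subset p.1 <= E}.
Proof.
move=> ps e ep; apply/negPn/negP => eE.
by have := s_sum (inl e); rewrite v_K (negbTE eE) muln0 (big_rem p ps) /= ffunE ep.
Qed.

Definition label_of (q : {set Kt V}) : label :=
  odflt (false, o0) [pick r | matching r == q].

Lemma label_ofP p : p \in s -> p.1 = matching (label_of p.1).
Proof.
move=> ps; have [r q_r] := pm_is_matching (allP s_pm p ps) (term_sub_E ps).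
rewrite /label_of; case: pickP => [r' /eqP -> // | none].
by have := none r; rewrite q_r eqxx.
Qed.

Definition labelled : seq (label * Ct V) := [seq (label_of p.1, p.2) | p <- s].

Lemma labelled_adm p : p \in labelled -> admissible (pin p.2) p.1.
Proof.
by case/mapP=> q qs ->; rewrite -pm_admissible -label_ofP //; exact: (allP s_pm q qs).
Qed.

Lemma labelled_cover x : \sum_(p <- labelled) (mate p.1 x.1 == x.2) = k.
Proof.
have := s_sum (inl (edge x.1 x.2)); rewrite v_K edge_in_E muln1 => ->.
rewrite big_map; apply: eq_big_seq => p ps.
by rewrite ffunE [in RHS](label_ofP ps) edge_in_matching.
Qed.

Lemma labelled_mult L : (forall c, count_mem c L = v (inr c)) ->
  forall c, \sum_(p <- labelled) (p.2 == c) = k * count_mem c L.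
Proof.
by move=> L_v c; rewrite L_v s_sum big_map; apply: eq_bigr => p _; rewrite ffunE eq_sym.
Qed.

End Decomposition.

Lemma inN_of_latin (v : vec V) (t : seq (label * Ct V)) :
  (forall e, v (inl e) = (e \in E)) ->
  (forall c, v (inr c) = count_mem c (map snd t)) ->
  (forall p, p \in t -> admissible (pin p.2) p.1) ->
  (forall x : cell, \sum_(p <- t) (mate p.1 x.1 == x.2) = 1) ->
  inN_PM v.
Proof.
move=> v_K v_C t_adm t_cover; exists [seq (matching p.1, p.2) | p <- t]; split.
  by apply/allP => _ /mapP [p pt ->]; rewrite /= pm_admissible t_adm.
case=> [e | c]; rewrite big_map.
  rewrite v_K; case: (boolP (e \in E)) => [/edgeP [i [j ->]] | eE].
    by rewrite /= -(t_cover (i, j)); apply: eq_bigr => p _; rewrite ffunE edge_in_matching.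
  rewrite big1 // => p _; rewrite ffunE; apply/eqP; rewrite eqb0.
  by apply: contra eE; exact: matching_sub_E.
by rewrite v_C count_sum big_map; apply: eq_bigr => p _; rewrite ffunE eq_sym.
Qed.

Lemma K33_B_factorizable : B_factorizable E.
Proof.
move=> v [k [k_gt0 [s [s_pm s_sum]]]] v_K.
have s_sum' z : k * v z = \sum_(p <- s) chiEc p.1 p.2 z by rewrite -s_sum ffunE.
have [L L_v] := exists_multiset (fun c => v (inr c)).
have [t [t_L t_adm t_cover]] := latin_witness k_gt0 (labelled_adm s_pm s_sum' v_K)
  (labelled_cover s_pm s_sum' v_K) (labelled_mult s_sum' L_v).
by apply: (inN_of_latin v_K _ t_adm t_cover) => c; rewrite t_L L_v.
Qed.

End CompleteBipartite33.

Theorem mainTheorem11 (V : finType) (H : {set V}) :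
  #|V| = 6 -> #|H| = 3 ->
  regular (complete_bip H) /\ B_factorizable (complete_bip H).
Proof.
by move=> card_V card_H; split; [exact: K33_regular | exact: K33_B_factorizable].
Qed.
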